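(* Let $\lambda \geq 0$, $0\leq \beta<1$, $\tau \in \mathbb{C}\setminus\{0\}$ and $m \in \mathbb{N}$. Let $f(z)=z+\sum_{k=1}^{\infty} a_{mk+1}z^{mk+1}$ belong to $\Theta_{\Sigma_m}(\tau,\lambda,0,0;\beta)$ (the case $\gamma=\delta=0$). Then $$|a_{m+1}| \leq \min\left\{\frac{2|\tau|(1-\beta)}{1+m\lambda},\ 2\sqrt{\frac{|\tau|(1-\beta)}{(m+1)(1+2m\lambda)}}\right\}\quad\text{and}\quad |a_{2m+1}| \leq \frac{2|\tau|(1-\beta)}{1+2m\lambda}.$$
   Context: Let $\mathbb{U}=\{z\in\mathbb{C}:|z|<1\}$ and $m\in\mathbb{N}$. $\mathcal{A}_m$ denotes the class of functions analytic in $\mathbb{U}$ of the form $f(z)=z+\sum_{k=1}^{\infty}a_{mk+1}z^{mk+1}$. $\Sigma_m$ denotes the class of $m$-fold symmetric bi-univalent functions: functions $f\in\mathcal{A}_m$ univalent in $\mathbb{U}$ whose inverse $f^{-1}$ extends to a univalent function $g$ on $\mathbb{U}$; this $g$ has the expansion $g(w)=w-a_{m+1}w^{m+1}+\left[(m+1)a_{m+1}^2-a_{2m+1}\right]w^{2m+1}-\cdots$. For $\delta\in\mathbb{N}_0$ and $h(z)=z+\sum_{k\ge1}c_{mk+1}z^{mk+1}$ analytic in $\mathbb{U}$, the $m$-fold Ruscheweyh derivative is $\mathcal{R}^\delta h(z)=z+\sum_{k=1}^{\infty}\frac{\Gamma(\delta+k+1)}{\Gamma(k+1)\Gamma(\delta+1)}c_{mk+1}z^{mk+1}$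 (for $\delta=0$ it is the identity). For such $h$ and parameters $\lambda,\gamma,\tau\neq0,\delta$, put $$J_h(z)=1+\frac{1}{\tau}\Big[(1-\lambda)(1-\gamma)\frac{\mathcal{R}^\delta h(z)}{z}+(\lambda(\gamma+1)+\gamma)(\mathcal{R}^\delta h)'(z)+\lambda\gamma\big(z(\mathcal{R}^\delta h)''(z)-2\big)-1\Big].$$ For $0\le\beta<1$, $\Theta_{\Sigma_m}(\tau,\lambda,\gamma,\delta;\beta)$ is the set of $f\in\Sigma_m$ such that $\operatorname{Re}J_f(z)>\beta$ for all $z\in\mathbb{U}$ and $\operatorname{Re}J_g(w)>\beta$ for all $w\in\mathbb{U}$, where $g$ is the extension of $f^{-1}$ to $\mathbb{U}$. *)

From Stdlib Require Import Reals.
From Coquelicot Require Import Coquelicot.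

Definition inU (z : C) : Prop := (Cmod z < 1)%R.

Definition Csum (a : nat -> C) : C :=
  @iota (CompleteNormedModule.CompleteSpace C_AbsRing C_CompleteNormedModule)
        (fun l : C => is_series a l).

(* An analytic function on U is represented by its Taylor coefficient
   sequence a (h(z) = sum_n a n z^n), the series converging on all of U. *)
Definition analytic_U (a : nat -> C) : Prop :=
  forall z : C, inU z -> ex_series (fun n => (a n * z ^ n)%C).

Definition psum (a : nat -> C) (z : C) : C := Csum (fun n => (a n * z ^ n)%C).

Definition in_Am (m : nat) (a : nat -> C) : Prop :=
  analytic_U a /\ a 0%nat = 0%C /\ a 1%nat = 1%C /\
  (forall n : nat, a n <> 0%C -> exists k : nat, n = (m * k + 1)%nat).

Definition univalent_U (a : nat -> C) : Prop :=
  forall z w : C, inU z -> inU w -> psum a z = psum a w -> z = w.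

(* f (coefficients a) is in Sigma_m with g (coefficients b) the univalent
   extension of f^{-1} to U: g = f^{-1} on f(U) /\ U. *)
Definition in_Sigma_with (m : nat) (a b : nat -> C) : Prop :=
  in_Am m a /\ univalent_U a /\ analytic_U b /\ univalent_U b /\
  (forall z : C, inU z -> inU (psum a z) -> psum b (psum a z) = z).

(* Coefficients of the m-fold Ruscheweyh derivative R^delta h:
   the coefficient of z^{mk+1} is multiplied by
   Gamma(delta+k+1)/(Gamma(k+1)Gamma(delta+1)) = binom(delta+k, k). *)
Definition Rcoef (m delta : nat) (c : nat -> C) (n : nat) : C :=
  match n with
  | O => c O
  | S n' => (RtoC (Binomial.C (delta + n' / m) (n' / m)) * c n)%C
  end.

Definition Rh_div_z (m delta : nat) (c : nat -> C) (z : C) : C :=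
  Csum (fun n => (Rcoef m delta c (S n) * z ^ n)%C).
Definition Rh_d1 (m delta : nat) (c : nat -> C) (z : C) : C :=
  Csum (fun n => (RtoC (INR (S n)) * Rcoef m delta c (S n) * z ^ n)%C).
Definition Rh_d2 (m delta : nat) (c : nat -> C) (z : C) : C :=
  Csum (fun n => (RtoC (INR (S (S n)) * INR (S n)) * Rcoef m delta c (S (S n)) * z ^ n)%C).

Definition Jfun (m : nat) (tau : C) (lam gam : R) (delta : nat)
    (c : nat -> C) (z : C) : C :=
  (1 + / tau *
     (RtoC ((1 - lam) * (1 - gam)) * Rh_div_z m delta c z
      + RtoC (lam * (gam + 1) + gam) * Rh_d1 m delta c z
      + RtoC (lam * gam) * (z * Rh_d2 m delta c z - 2)
      - 1))%C.

Definition in_Theta (m : nat) (tau : C) (lam gam : R) (delta : nat) (beta : R)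
    (a : nat -> C) : Prop :=
  exists b : nat -> C, in_Sigma_with m a b /\
    (forall z : C, inU z -> (beta < Re (Jfun m tau lam gam delta a z))%R) /\
    (forall w : C, inU w -> (beta < Re (Jfun m tau lam gam delta b w))%R).

From Stdlib Require Import Reals Lra Lia Arith Classical.
From Coquelicot Require Import Coquelicot.
Open Scope R_scope.

(* For gamma = delta = 0, the Taylor coefficients of J_f - beta are (1 + n lam) a_(n+1) / tau
   (n >= 1) and 1 - beta, and J_f - beta has positive real part; the same holds for g.
   Caratheodory's lemma |c_n| <= 2 Re c_0, proved by averaging over the N-th roots of unity on
   circles of radius r < 1 and letting N -> oo, r -> 1, bounds a_(m+1), a_(2m+1) and the
   coefficient b_(2m+1) of g.  Comparing g (f t) = t for small t > 0 order by order gives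
   b_(2m+1) = (m+1) a_(m+1)^2 - a_(2m+1), so (m+1) |a_(m+1)|^2 <= |b_(2m+1)| + |a_(2m+1)|. *)

Lemma Csum_unique (a : nat -> C) (l : C) : is_series a l -> Csum a = l.
Proof.
  intros H. unfold Csum.
  apply (@iota_unique C_AbsRing C_CompleteNormedModule (fun l0 : C => is_series a l0) l); [|exact H].
  intros y Hy.
  exact (@filterlim_locally_unique nat C_AbsRing C_NormedModule eventually
           (Proper_StrongProper _ eventually_filter) (sum_n a) y l Hy H).
Qed.

Lemma is_series_Csum (a : nat -> C) : ex_series a -> is_series a (Csum a).
Proof. intros [l Hl]. rewrite (Csum_unique _ l Hl). exact Hl. Qed.

Lemma psum_is_series (c : nat -> C) (z : C) :
  analytic_U c -> inU z -> is_series (fun n => c n * z ^ n)%C (psum c z).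
Proof. intros Hc Hz. apply is_series_Csum, Hc, Hz. Qed.

Lemma Cmod_RtoC_nonneg (s : R) : 0 <= s -> Cmod (RtoC s) = s.
Proof. intros; rewrite Cmod_R; apply Rabs_pos_eq; auto. Qed.

Lemma Re_RtoC_mult (x : R) (z : C) : Re (RtoC x * z)%C = x * Re z.
Proof. destruct z; unfold Re, RtoC, Cmult; simpl. ring. Qed.

Lemma Re_le_Cmod (z : C) : Re z <= Cmod z.
Proof. pose proof (re_le_Cmod z). pose proof (Rle_abs (Re z)). lra. Qed.

Lemma is_series_C0 : @is_series C_AbsRing C_NormedModule (fun _ => RtoC 0) (RtoC 0).
Proof.
  unfold is_series. eapply filterlim_ext; [|apply filterlim_const].
  intros n. simpl. induction n as [|n IH].
  - now rewrite sum_O.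
  - rewrite sum_Sn, <- IH. symmetry.
    apply (@plus_zero_r (NormedModule.AbelianMonoid C_AbsRing C_NormedModule)).
Qed.

Lemma is_series_delta0 (K : C) :
  @is_series C_AbsRing C_NormedModule (fun n => if Nat.eqb n 0 then K else RtoC 0) K.
Proof.
  apply is_series_decr_1. simpl.
  match goal with |- is_series _ ?x => replace x with (RtoC 0) end.
  - apply is_series_C0.
  - change (RtoC 0 = Cplus K (Copp K)). ring.
Qed.

(* Unlike Coquelicot's [sum_n a N], the upper index [L] is excluded. *)
Fixpoint sum_lt (a : nat -> C) (L : nat) : C :=
  match L with O => 0%C | S L' => (sum_lt a L' + a L')%C end.

Lemma sum_lt_ext (f g : nat -> C) N :
  (forall j, (j < N)%nat -> f j = g j) -> sum_lt f N = sum_lt g N.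
Proof.
  induction N as [|N IH]; intros H; simpl; [reflexivity|].
  rewrite IH, H; auto with arith.
Qed.

Lemma sum_lt_scal (k : C) (f : nat -> C) N :
  sum_lt (fun j => k * f j)%C N = (k * sum_lt f N)%C.
Proof. induction N as [|N IH]; simpl; [ring|]. rewrite IH; ring. Qed.

Lemma sum_lt_add (f g : nat -> C) N :
  sum_lt (fun j => f j + g j)%C N = (sum_lt f N + sum_lt g N)%C.
Proof. induction N as [|N IH]; simpl; [ring|]. rewrite IH. ring. Qed.

Lemma sum_lt_conj (f : nat -> C) N : Cconj (sum_lt f N) = sum_lt (fun j => Cconj (f j)) N.
Proof.
  induction N as [|N IH]; simpl.
  - apply injective_projections; simpl; ring.
  - rewrite Cplus_conj, IH. reflexivity.
Qed.

Lemma sum_lt_zero (f : nat -> C) L : (forall l, (l < L)%nat -> f l = 0%C) -> sum_lt f L = 0%C.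
Proof.
  induction L as [|L IH]; intros H; simpl; [reflexivity|].
  rewrite IH, H by auto with arith. ring.
Qed.

Lemma sum_lt_single (f : nat -> C) L i : (i < L)%nat ->
  (forall l, (l < L)%nat -> l <> i -> f l = 0%C) -> sum_lt f L = f i.
Proof.
  induction L as [|L IH]; intros Hi H; [lia|]. simpl.
  destruct (Nat.eq_dec i L) as [->|Hne].
  - rewrite sum_lt_zero; [ring|]. intros l Hl. apply H; lia.
  - rewrite IH, (H L) by (lia || (intros; apply H; lia)). ring.
Qed.

Lemma sum_lt_indicator (i L : nat) (x : C) : (i < L)%nat ->
  sum_lt (fun n => if Nat.eqb n i then x else 0%C) L = x.
Proof.
  intros Hi. rewrite (sum_lt_single _ _ i Hi); [now rewrite Nat.eqb_refl|].
  intros l _ Hl. destruct (Nat.eqb_spec l i); [lia|reflexivity].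
Qed.

Lemma Cmod_sum_lt_le_Re (f g : nat -> C) N :
  (forall j, Cmod (f j) <= Re (g j)) -> Cmod (sum_lt f N) <= Re (sum_lt g N).
Proof.
  intros H. induction N as [|N IH].
  - simpl. rewrite Cmod_0. simpl. lra.
  - change (Cmod (sum_lt f N + f N) <= Re (sum_lt g N + g N)).
    eapply Rle_trans; [apply Cmod_triangle|]. rewrite re_plus. specialize (H N). lra.
Qed.

Lemma is_series_sum_lt (y : nat -> nat -> C) (Y : nat -> C) N :
  (forall j, is_series (y j) (Y j)) ->
  is_series (fun l => sum_lt (fun j => y j l) N) (sum_lt Y N).
Proof.
  intros H. induction N as [|N IH]; simpl.
  - apply is_series_C0.
  - apply (is_series_plus _ _ _ _ IH (H N)).
Qed.

Lemma is_series_tail (a : nat -> C) (l : C) (L : nat) :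
  is_series a l -> is_series (fun k => a (L + k)%nat) (l - sum_lt a L)%C.
Proof.
  intros H. induction L as [|L IH].
  - simpl. replace (l - 0)%C with l by ring. exact H.
  - assert (H2 : is_series (fun k => a (L + S k)%nat) (l - sum_lt a (S L))%C).
    { apply (is_series_incr_1 (fun k => a (L + k)%nat)).
      match goal with |- is_series _ ?x => replace x with (l - sum_lt a L)%C; [exact IH|] end.
      simpl. change plus with Cplus. rewrite Nat.add_0_r. ring. }
    eapply is_series_ext; [|exact H2]. intros n; simpl. f_equal; lia.
Qed.

Lemma Cmod_series_le (a : nat -> C) (l : C) (b : nat -> R) (lb : R) :
  is_series a l -> is_series b lb -> (forall n, Cmod (a n) <= b n) -> Cmod l <= lb.
Proof.
  intros Ha Hb Hab.
  assert (H := filterlim_le (F := eventually) (fun N => Cmod (sum_n a N)) (sum_n b) (Cmod l) lb).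
  simpl in H. apply H; [| |exact Hb].
  - exists 0%nat. intros N _. induction N as [|N IH].
    + rewrite !sum_O. apply Hab.
    + rewrite !sum_Sn. eapply Rle_trans; [apply Cmod_triangle|].
      specialize (Hab (S N)). change (Cmod (sum_n a N) + Cmod (a (S N)) <= sum_n b N + b (S N)).
      lra.
  - apply (filterlim_comp _ _ _ (sum_n a) (@norm C_AbsRing C_NormedModule) eventually (locally l)).
    + exact Ha.
    + intros P HP. exact (@filterlim_norm C_AbsRing C_NormedModule l P HP).
Qed.

Lemma Cmod_series_tail_le (a : nat -> C) (l : C) (B q : R) (L : nat) :
  is_series a l -> 0 <= q < 1 -> (forall n, Cmod (a n) <= B * q ^ n) ->
  Cmod (l - sum_lt a L)%C <= B * q ^ L / (1 - q).
Proof.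
  intros Ha Hq Hb.
  apply (Cmod_series_le (fun k => a (L + k)%nat) _ (fun k => B * q ^ L * q ^ k)).
  - apply is_series_tail, Ha.
  - apply (is_series_scal (V := R_NormedModule) (B * q ^ L)).
    apply is_series_geom. rewrite Rabs_pos_eq; lra.
  - intros k. rewrite Rmult_assoc, <- pow_add. apply Hb.
Qed.

Lemma ex_series_terms_bounded (a : nat -> C) :
  ex_series a -> exists M, 0 <= M /\ forall n, Cmod (a n) <= M.
Proof.
  intros [l Hl].
  destruct (filterlim_bounded (sum_n a)) as [M HM]; [exists l; exact Hl|].
  assert (HM' : forall n, Cmod (sum_n a n) <= M) by exact HM.
  assert (0 <= M) by (eapply Rle_trans; [apply Cmod_ge_0| apply (HM' 0%nat)]).
  exists (2 * M). split; [lra|]. intros [|n].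
  - pose proof (HM' 0%nat) as H0. rewrite sum_O in H0. lra.
  - replace (a (S n)) with (sum_n a (S n) - sum_n a n)%C
      by (rewrite sum_Sn; change (@plus C_AbelianMonoid) with Cplus; ring).
    eapply Rle_trans; [apply Cmod_triangle|].
    rewrite Cmod_opp. pose proof (HM' (S n)). pose proof (HM' n). lra.
Qed.

Lemma analytic_U_coef_bounded (c : nat -> C) (s : R) : analytic_U c -> 0 <= s < 1 ->
  exists M, 0 <= M /\ forall n, Cmod (c n) * s ^ n <= M.
Proof.
  intros Hc Hs.
  assert (Hin : inU (RtoC s)) by (unfold inU; rewrite Cmod_RtoC_nonneg; lra).
  destruct (ex_series_terms_bounded _ (Hc _ Hin)) as [M [HM0 HM]].
  exists M; split; auto. intros n. specialize (HM n).
  rewrite Cmod_mult, Cmod_pow, Cmod_RtoC_nonneg in HM; lra.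
Qed.

(* Coefficient bound on the radius 3/4: the tail is geometric with ratio 4|w|/3 <= 2/3. *)
Lemma psum_sub_sum_lt_le (c : nat -> C) (L : nat) : analytic_U c ->
  exists K, 0 <= K /\ forall w, Cmod w <= 1/2 ->
    Cmod (psum c w - sum_lt (fun n => c n * w ^ n)%C L)%C <= K * Cmod w ^ L.
Proof.
  intros Hc. destruct (analytic_U_coef_bounded c (3/4) Hc) as [M [HM0 HM]]; [lra|].
  exists (3 * M * (4/3) ^ L). split; [apply Rmult_le_pos; [lra| apply pow_le; lra]|].
  intros w Hw. pose proof (Cmod_ge_0 w).
  assert (Hin : inU w) by (unfold inU; lra).
  set (q := Cmod w * (4/3)).
  assert (Hq : 0 <= q <= 2/3) by (unfold q; lra).
  eapply Rle_trans; [apply (Cmod_series_tail_le _ _ M q L (psum_is_series c w Hc Hin))|].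
  - lra.
  - intros n. rewrite Cmod_mult, Cmod_pow. specialize (HM n).
    replace (Cmod w) with ((3/4) * q) by (unfold q; field).
    rewrite Rpow_mult_distr, <- Rmult_assoc. apply Rmult_le_compat_r; [apply pow_le; lra| auto].
  - unfold q. rewrite Rpow_mult_distr.
    assert (0 <= Cmod w ^ L) by (apply pow_le; lra).
    assert (0 <= (4/3) ^ L) by (apply pow_le; lra).
    assert (0 <= M * (Cmod w ^ L * (4/3) ^ L)) by (apply Rmult_le_pos; [|apply Rmult_le_pos]; lra).
    apply (Rmult_le_reg_r (1 - Cmod w * (4/3))); [lra|].
    unfold Rdiv. rewrite Rmult_assoc, Rinv_l by lra. nra.
Qed.

Definition unit_root (N : nat) : C := (cos (2 * PI / INR N), sin (2 * PI / INR N)).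

Lemma unit_root_pow N n :
  (unit_root N ^ n)%C = (cos (INR n * (2 * PI / INR N)), sin (INR n * (2 * PI / INR N))).
Proof.
  induction n as [|n IH].
  - simpl. rewrite Rmult_0_l, cos_0, sin_0. reflexivity.
  - rewrite Cpow_S, IH. unfold unit_root, Cmult. simpl fst; simpl snd.
    rewrite S_INR, Rmult_plus_distr_r, Rmult_1_l, cos_plus, sin_plus.
    f_equal; ring.
Qed.

Lemma Cmod_unit_root_pow N n : Cmod (unit_root N ^ n) = 1.
Proof.
  rewrite unit_root_pow. unfold Cmod. simpl fst; simpl snd.
  rewrite <- sqrt_1. f_equal. pose proof (sin2_cos2 (INR n * (2 * PI / INR N))).
  unfold Rsqr in H. lra.
Qed.

Lemma unit_root_pow_N N : (0 < N)%nat -> (unit_root N ^ N)%C = 1%C.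
Proof.
  intros HN. rewrite unit_root_pow.
  replace (INR N * (2 * PI / INR N)) with (2 * PI) by (field; apply not_0_INR; lia).
  rewrite cos_2PI, sin_2PI. reflexivity.
Qed.

Lemma unit_root_pow_mod N s : (0 < N)%nat -> (unit_root N ^ s)%C = (unit_root N ^ (s mod N))%C.
Proof.
  intros HN. rewrite (Nat.div_mod s N) at 1 by lia.
  rewrite Cpow_add_r, Cpow_mult_r, unit_root_pow_N, Cpow_1_l by auto. ring.
Qed.

(* For 0 < s < N the half angle s PI / N lies in (0, PI), where sin does not vanish. *)
Lemma unit_root_pow_neq1 N s : (0 < s < N)%nat -> (unit_root N ^ s)%C <> 1%C.
Proof.
  intros Hs E. rewrite unit_root_pow in E. injection E as E1 _.
  set (x := INR s * (2 * PI / INR N)) in *.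
  assert (Hx : 0 < x / 2 < PI).
  { assert (0 < INR s) by (apply lt_0_INR; lia).
    assert (INR s < INR N) by (apply lt_INR; lia).
    pose proof PI_RGT_0.
    replace (x / 2) with (PI * (INR s / INR N)) by (unfold x; field; lra).
    split.
    - apply Rmult_lt_0_compat; [lra|]. apply Rdiv_lt_0_compat; lra.
    - rewrite <- (Rmult_1_r PI) at 2. apply Rmult_lt_compat_l; [lra|].
      apply Rlt_div_l; lra. }
  pose proof (sin_gt_0 _ (proj1 Hx) (proj2 Hx)).
  replace x with (2 * (x / 2)) in E1 by field.
  rewrite cos_2a_sin in E1. nra.
Qed.

Lemma geom_sum_lt (u : C) N : ((u - 1) * sum_lt (fun j => u ^ j) N = u ^ N - 1)%C.
Proof.
  induction N as [|N IH]; simpl sum_lt.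
  - simpl. ring.
  - rewrite Cpow_S, Cmult_plus_distr_l, IH. ring.
Qed.

Lemma sum_lt_unit_root_pow N s : (0 < N)%nat ->
  sum_lt (fun j => (unit_root N ^ s) ^ j)%C N =
  if Nat.eqb (s mod N) 0 then RtoC (INR N) else 0%C.
Proof.
  intros HN. rewrite unit_root_pow_mod by exact HN.
  destruct (Nat.eqb_spec (s mod N) 0) as [E|E].
  - rewrite E. simpl Cpow at 1. clear. induction N as [|N IH]; [reflexivity|].
    simpl sum_lt. rewrite IH, Cpow_1_l, S_INR, RtoC_plus. reflexivity.
  - set (u := (unit_root N ^ (s mod N))%C).
    assert (Hu : (u - 1 <> 0)%C).
    { intros H. apply (unit_root_pow_neq1 N (s mod N)).
      + split; [lia|]. apply Nat.mod_upper_bound; lia.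
      + fold u. replace u with ((u - 1) + 1)%C by ring. rewrite H. ring. }
    assert (HuN : (u ^ N = 1)%C).
    { unfold u. rewrite <- Cpow_mult_r, Nat.mul_comm, Cpow_mult_r, unit_root_pow_N by exact HN.
      apply Cpow_1_l. }
    assert (G : ((u - 1) * sum_lt (fun j => u ^ j) N = 0)%C)
      by (rewrite geom_sum_lt, HuN; ring).
    transitivity (/ (u - 1) * ((u - 1) * sum_lt (fun j => u ^ j) N))%C.
    + field. exact Hu.
    + rewrite G. ring.
Qed.

(* Coefficients are bounded on the intermediate radius (1 + r) / 2. *)
Lemma analytic_U_coef_geom (c : nat -> C) (r : R) : analytic_U c -> 0 <= r < 1 ->
  exists M q, 0 <= M /\ 0 <= q < 1 /\ forall n, Cmod (c n) * r ^ n <= M * q ^ n.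
Proof.
  intros Hc Hr. set (s := (1 + r) / 2).
  destruct (analytic_U_coef_bounded c s Hc) as [M [HM0 HM]]; [unfold s; lra|].
  exists M, (r / s). split; [exact HM0|]. split.
  - unfold s. split; [apply Rdiv_le_0_compat; lra|]. apply Rlt_div_l; lra.
  - intros n. replace r with (s * (r / s)) at 1 by (unfold s; field; lra).
    rewrite Rpow_mult_distr, <- Rmult_assoc.
    apply Rmult_le_compat_r; [apply pow_le; apply Rdiv_le_0_compat; unfold s; lra| apply HM].
Qed.

Lemma le_of_le_add_geom (x y K q : R) (n0 : nat) : 0 <= q < 1 ->
  (forall n, (n0 <= n)%nat -> x <= y + K * q ^ n) -> x <= y.
Proof.
  intros Hq H. apply Rnot_lt_le. intros Hlt.
  destruct (pow_lt_1_zero q) with (y := (x - y) / (Rabs K + 1)) as [N HN].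
  { rewrite Rabs_pos_eq; lra. }
  { apply Rdiv_lt_0_compat; [lra|]. pose proof (Rabs_pos K). lra. }
  specialize (H (n0 + N)%nat ltac:(lia)). specialize (HN (n0 + N)%nat ltac:(lia)).
  set (Q := q ^ (n0 + N)) in *.
  assert (HQ : 0 <= Q) by (apply pow_le; lra).
  rewrite Rabs_pos_eq in HN by exact HQ.
  pose proof (Rle_abs K). pose proof (Rabs_pos K).
  assert (K * Q <= Rabs K * Q) by (apply Rmult_le_compat_r; lra).
  assert ((Rabs K + 1) * Q < x - y).
  { apply Rlt_div_r in HN; [|lra]. lra. }
  nra.
Qed.

Lemma pow_ge_1_sub_mul (x : R) (n : nat) : 0 <= x <= 1 -> 1 - INR n * (1 - x) <= x ^ n.
Proof.
  intros Hx. induction n as [|n IH].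
  - simpl. lra.
  - rewrite S_INR. simpl. pose proof (pos_INR n).
    assert (x * (1 - INR n * (1 - x)) <= x * x ^ n) by (apply Rmult_le_compat_l; lra).
    assert (0 <= INR n * ((1 - x) * (1 - x))) by (apply Rmult_le_pos; nra). nra.
Qed.

(* Bernoulli: x (1 - k e) <= x (1 - e)^k <= y for every small e > 0. *)
Lemma le_of_forall_mul_pow_le (x y : R) (k : nat) :
  (forall r, 0 < r < 1 -> x * r ^ k <= y) -> x <= y.
Proof.
  intros H. apply Rnot_lt_le. intros Hlt.
  destruct (Rle_or_lt x 0) as [Hx|Hx].
  - specialize (H (1/2) ltac:(lra)).
    pose proof (pow_incr (1/2) 1 k ltac:(lra)) as Hle. rewrite pow1 in Hle.
    assert (0 <= (1/2) ^ k) by (apply pow_le; lra).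
    nra.
  - set (e := Rmin (1/2) ((x - y) / (2 * (INR k + 1) * x))).
    assert (Hdiv : 0 < (x - y) / (2 * (INR k + 1) * x)).
    { pose proof (pos_INR k). apply Rdiv_lt_0_compat; nra. }
    assert (He : 0 < e <= 1/2) by (split; [apply Rmin_pos; lra| apply Rmin_l]).
    assert (Hke : (INR k + 1) * e * x <= (x - y) / 2).
    { pose proof (pos_INR k).
      assert (He2 : e <= (x - y) / (2 * (INR k + 1) * x)) by apply Rmin_r.
      apply Rle_div_r in He2; [lra| nra]. }
    specialize (H (1 - e) ltac:(lra)).
    pose proof (pow_ge_1_sub_mul (1 - e) k ltac:(lra)).
    assert (x * (1 - INR k * (1 - (1 - e))) <= x * (1 - e) ^ k) by (apply Rmult_le_compat_l; lra).
    pose proof (pos_INR k). nra.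
Qed.

(* A discrete Fourier coefficient of [psum c] on the circle of radius [r]; by
   [sum_lt_unit_root_pow] it only sees the coefficients [c l] with [N | t + l]. *)
Definition unit_root_moment (c : nat -> C) (N : nat) (r : R) (t : nat) : C :=
  sum_lt (fun j => (unit_root N ^ j) ^ t * psum c (RtoC r * unit_root N ^ j))%C N.

Definition aliased_coef (c : nat -> C) (N : nat) (r : R) (t l : nat) : C :=
  if Nat.eqb ((t + l) mod N) 0 then (RtoC (INR N) * (c l * RtoC (r ^ l)))%C else 0%C.

Section Caratheodory.

Variable c : nat -> C.
Hypothesis Hc : analytic_U c.
Variables (N : nat) (r : R).
Hypothesis HN : (0 < N)%nat.
Hypothesis Hr : 0 <= r < 1.
Hypothesis Hc_pos : forall z, inU z -> 0 < Re (psum c z).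

Lemma inU_unit_root_circle j : inU (RtoC r * unit_root N ^ j)%C.
Proof. unfold inU. rewrite Cmod_mult, Cmod_RtoC_nonneg, Cmod_unit_root_pow; lra. Qed.

Lemma unit_root_moment_series t :
  is_series (aliased_coef c N r t) (unit_root_moment c N r t).
Proof.
  eapply is_series_ext;
    [|apply (is_series_sum_lt (fun j l => (unit_root N ^ j) ^ t *
                                         (c l * (RtoC r * unit_root N ^ j) ^ l))%C)].
  - intros l. simpl. symmetry.
    transitivity (c l * RtoC (r ^ l) * sum_lt (fun j => (unit_root N ^ (t + l)) ^ j) N)%C.
    { unfold aliased_coef. rewrite sum_lt_unit_root_pow by exact HN.
      destruct (Nat.eqb _ 0); ring. }
    rewrite <- sum_lt_scal. apply sum_lt_ext. intros j _.
    rewrite Cpow_mult_l, <- RtoC_pow, <- !Cpow_mult_r, Nat.mul_add_distr_r, Cpow_add_r,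
      (Nat.mul_comm j t), (Nat.mul_comm j l).
    ring.
  - intros j. apply (@is_series_scal C_AbsRing C_NormedModule).
    apply psum_is_series; [exact Hc| apply inU_unit_root_circle].
Qed.

Lemma Cmod_unit_root_moment_sub_le (M q : R) (t L : nat) :
  0 <= M -> 0 <= q < 1 -> (forall n, Cmod (c n) * r ^ n <= M * q ^ n) ->
  Cmod (unit_root_moment c N r t - sum_lt (aliased_coef c N r t) L)%C
    <= INR N * M * q ^ L / (1 - q).
Proof.
  intros HM Hq Hcq. apply Cmod_series_tail_le; [apply unit_root_moment_series| exact Hq|].
  intros l. unfold aliased_coef. destruct (Nat.eqb ((t + l) mod N) 0).
  - rewrite !Cmod_mult, !Cmod_RtoC_nonneg by (apply pow_le || apply pos_INR; lra).
    rewrite !Rmult_assoc. apply Rmult_le_compat_l; [apply pos_INR| apply Hcq].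
  - rewrite Cmod_0. pose proof (pos_INR N). pose proof (pow_le q l (proj1 Hq)).
    apply Rmult_le_pos; [apply Rmult_le_pos|]; lra.
Qed.

Section Aliasing.

Variable k : nat.
Hypothesis Hk : (1 <= k)%nat.
Hypothesis HkN : (2 * k + 1 <= N)%nat.

Lemma sum_aliased_coef_sub : sum_lt (aliased_coef c N r (N - k)) (N - k) =
  (RtoC (INR N) * (c k * RtoC (r ^ k)))%C.
Proof.
  rewrite (sum_lt_single _ _ k) by lia || (intros l Hl Hlk; unfold aliased_coef;
    destruct (Nat.eqb_spec ((N - k + l) mod N) 0) as [E|E]; [exfalso|reflexivity];
    destruct (Nat.lt_ge_cases l k);
    [rewrite Nat.mod_small in E by lia; lia
    |replace (N - k + l)%nat with ((l - k) + 1 * N)%nat in E by lia;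
     rewrite Nat.Div0.mod_add, Nat.mod_small in E by lia; lia]).
  unfold aliased_coef. replace (N - k + k)%nat with N by lia.
  now rewrite Nat.Div0.mod_same.
Qed.

Lemma sum_aliased_coef_pos : sum_lt (aliased_coef c N r k) (N - k) = 0%C.
Proof.
  apply sum_lt_zero. intros l Hl. unfold aliased_coef.
  rewrite Nat.mod_small by lia. destruct (Nat.eqb_spec (k + l) 0); [lia|reflexivity].
Qed.

Lemma sum_aliased_coef_0 : sum_lt (aliased_coef c N r 0) (N - k) =
  (RtoC (INR N) * c 0%nat)%C.
Proof.
  rewrite (sum_lt_single _ _ 0) by lia || (intros l Hl Hl0; unfold aliased_coef;
    rewrite Nat.mod_small by lia; destruct (Nat.eqb_spec (0 + l) 0); [lia|reflexivity]).
  unfold aliased_coef. rewrite Nat.Div0.mod_0_l. simpl. ring.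
Qed.

End Aliasing.

(* On the circle, w^(j(N-k)) p + conj (w^(jk) p) = w^(-jk) 2 Re p, whose modulus is 2 Re p. *)
Lemma Cmod_unit_root_moment_le (k : nat) : (k <= N)%nat ->
  Cmod (unit_root_moment c N r (N - k) + Cconj (unit_root_moment c N r k))%C
    <= 2 * Re (unit_root_moment c N r 0).
Proof.
  intros HkN. unfold unit_root_moment.
  rewrite sum_lt_conj, <- sum_lt_add.
  replace (2 * _) with (Re (sum_lt (fun j => RtoC 2 * psum c (RtoC r * unit_root N ^ j))%C N)).
  2:{ rewrite sum_lt_scal, Re_RtoC_mult. f_equal. f_equal.
      apply sum_lt_ext. intros j _. simpl. ring. }
  apply Cmod_sum_lt_le_Re. intros j. set (p := psum c (RtoC r * unit_root N ^ j)).
  set (u := (unit_root N ^ j)%C).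
  assert (Hu : forall n, Cmod (u ^ n) = 1).
  { intros n. unfold u. rewrite <- Cpow_mult_r. apply Cmod_unit_root_pow. }
  assert (HuN : (u ^ N = 1)%C).
  { unfold u. rewrite <- Cpow_mult_r, Nat.mul_comm, Cpow_mult_r, unit_root_pow_N by exact HN.
    apply Cpow_1_l. }
  assert (Hconj : Cconj (u ^ k) = (u ^ (N - k))%C).
  { pose proof (Cmod2_conj (u ^ k)) as E. rewrite Hu, pow1 in E.
    transitivity (Cconj (u ^ k) * (u ^ k * u ^ (N - k)))%C.
    - rewrite <- Cpow_add_r. replace (k + (N - k))%nat with N by lia. rewrite HuN. ring.
    - rewrite Cmult_assoc, (Cmult_comm (Cconj _)), <- E. ring. }
  replace (u ^ (N - k) * p + Cconj (u ^ k * p))%C with (u ^ (N - k) * RtoC (2 * Re p))%C.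
  - rewrite Cmod_mult, Hu, Re_RtoC_mult, Cmod_RtoC_nonneg.
    + lra.
    + pose proof (Hc_pos _ (inU_unit_root_circle j)). fold p in H. lra.
  - rewrite Cmult_conj, Hconj. destruct p as [p1 p2].
    apply injective_projections; simpl; ring.
Qed.


(* The moments for t = N - k, k, 0 are N c_k r^k, 0 and N c_0 up to aliasing errors. *)
Lemma Cmod_coef_mul_pow_le (k : nat) (M q : R) :
  (1 <= k)%nat -> (2 * k + 1 <= N)%nat -> 0 <= M -> 0 <= q < 1 ->
  (forall n, Cmod (c n) * r ^ n <= M * q ^ n) ->
  Cmod (c k) * r ^ k <= 2 * Re (c 0%nat) + 4 * M / (1 - q) * q ^ (N - k).
Proof.
  intros Hk HkN HM Hq Hcq.
  set (A := unit_root_moment c N r).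
  set (B := INR N * M * q ^ (N - k) / (1 - q)).
  pose proof (Cmod_unit_root_moment_sub_le M q (N - k) (N - k) HM Hq Hcq) as T1.
  pose proof (Cmod_unit_root_moment_sub_le M q k (N - k) HM Hq Hcq) as T2.
  pose proof (Cmod_unit_root_moment_sub_le M q 0 (N - k) HM Hq Hcq) as T3.
  rewrite sum_aliased_coef_sub in T1 by lia.
  rewrite sum_aliased_coef_pos in T2 by lia.
  replace (unit_root_moment c N r k - 0)%C with (unit_root_moment c N r k) in T2 by ring.
  rewrite sum_aliased_coef_0 in T3 by lia.
  fold A B in T1, T2, T3.
  pose proof (Cmod_unit_root_moment_le k ltac:(lia)) as Key. fold A in Key.
  set (S := (RtoC (INR N) * (c k * RtoC (r ^ k)))%C) in T1.
  assert (HS : Cmod S <= 2 * Re (A 0%nat) + 2 * B).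
  { replace S with ((A (N - k)%nat + Cconj (A k)) - (A (N - k)%nat - S) - Cconj (A k))%C by ring.
    eapply Rle_trans; [apply Cmod_triangle|]. rewrite Cmod_opp, Cmod_conj.
    eapply Rle_trans; [apply Rplus_le_compat_r, Cmod_triangle|]. rewrite Cmod_opp. lra. }
  assert (HA0 : Re (A 0%nat) <= INR N * Re (c 0%nat) + B).
  { replace (A 0%nat) with (RtoC (INR N) * c 0%nat + (A 0%nat - RtoC (INR N) * c 0%nat))%C
      by ring.
    rewrite re_plus, Re_RtoC_mult. pose proof (Re_le_Cmod (A 0%nat - RtoC (INR N) * c 0%nat)%C).
    lra. }
  unfold S in HS. rewrite !Cmod_mult, !Cmod_RtoC_nonneg in HS by (apply pos_INR || (apply pow_le; lra)).
  assert (HNpos : 0 < INR N) by (apply lt_0_INR; exact HN).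
  apply (Rmult_le_reg_l (INR N)); [exact HNpos|].
  replace (INR N * (2 * Re (c 0%nat) + 4 * M / (1 - q) * q ^ (N - k)))
    with (2 * (INR N * Re (c 0%nat)) + 4 * B) by (unfold B; field; lra).
  lra.
Qed.

End Caratheodory.

Lemma caratheodory_coef_bound (c : nat -> C) (k : nat) : analytic_U c ->
  (forall z, inU z -> 0 < Re (psum c z)) -> (1 <= k)%nat ->
  Cmod (c k) <= 2 * Re (c 0%nat).
Proof.
  intros Hc Hpos Hk. apply (le_of_forall_mul_pow_le _ _ k). intros r Hr.
  destruct (analytic_U_coef_geom c r Hc) as (M & q & HM & Hq & Hcq); [lra|].
  apply (le_of_le_add_geom _ _ (4 * M / (1 - q)) q (S k) Hq). intros L HL.
  replace (q ^ L) with (q ^ (L + k - k)) by (f_equal; lia).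
  apply (Cmod_coef_mul_pow_le c Hc (L + k) r); auto; lia || lra.
Qed.

Lemma succ_mul_pow_le (y : R) (n : nat) : 0 <= y < 1 -> INR (S n) * y ^ n <= / (1 - y).
Proof.
  intros Hy. apply (Rmult_le_reg_r (1 - y)); [lra|]. rewrite Rinv_l by lra.
  induction n as [|n IH]; [simpl; lra|].
  assert (y ^ S n <= 1) by (rewrite <- (pow1 (S n)); apply pow_incr; lra).
  assert (0 <= y ^ S n) by (apply pow_le; lra).
  rewrite S_INR. simpl pow. simpl pow in H, H0. nra.
Qed.

(* Split x = y g with y = (1 + x) / 2: the factor n + 1 is absorbed by y^n. *)
Lemma ex_series_le_succ_mul_geom (u : nat -> C) (K x : R) : 0 <= x < 1 ->
  (forall n, Cmod (u n) <= K * INR (S n) * x ^ n) -> ex_series u.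
Proof.
  intros Hx Hu. set (y := (1 + x) / 2). set (g := x / y).
  assert (Hy : 0 < y < 1) by (unfold y; lra).
  assert (Hg : 0 <= g < 1).
  { unfold g. split; [apply Rdiv_le_0_compat; lra| apply Rlt_div_l; unfold y in *; lra]. }
  assert (HK : 0 <= K).
  { specialize (Hu 0%nat). simpl in Hu. pose proof (Cmod_ge_0 (u 0%nat)). lra. }
  apply (@ex_series_le C_AbsRing C_CompleteNormedModule u (fun n => K / (1 - y) * g ^ n)).
  - intros n. change (Cmod (u n) <= K / (1 - y) * g ^ n).
    eapply Rle_trans; [apply Hu|].
    replace x with (y * g) by (unfold g; field; lra). rewrite Rpow_mult_distr.
    pose proof (succ_mul_pow_le y n ltac:(lra)).
    assert (0 <= g ^ n) by (apply pow_le; lra).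
    unfold Rdiv. rewrite !Rmult_assoc. apply Rmult_le_compat_l; [exact HK|].
    rewrite <- Rmult_assoc. apply Rmult_le_compat_r; lra.
  - exists (K / (1 - y) * / (1 - g)).
    apply (is_series_scal (V := R_NormedModule)). apply is_series_geom.
    rewrite Rabs_pos_eq; lra.
Qed.

Lemma ex_series_weighted_shift (c : nat -> C) (w : nat -> R) (z : C) : analytic_U c ->
  (forall n, Rabs (w n) <= INR (S n)) -> inU z ->
  ex_series (fun n => RtoC (w n) * c (S n) * z ^ n)%C.
Proof.
  intros Hc Hw Hz. unfold inU in Hz. pose proof (Cmod_ge_0 z).
  set (s := (1 + Cmod z) / 2).
  destruct (analytic_U_coef_bounded c s Hc) as [M [HM0 HM]]; [unfold s; lra|].
  apply (ex_series_le_succ_mul_geom _ (M / s) (Cmod z / s)).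
  { split; [apply Rdiv_le_0_compat| apply Rlt_div_l]; unfold s; lra. }
  intros n. rewrite !Cmod_mult, Cmod_pow, Cmod_R.
  specialize (HM (S n)). specialize (Hw n). simpl pow in HM.
  assert (Hs : 0 < s) by (unfold s; lra).
  replace (M / s * INR (S n) * (Cmod z / s) ^ n)
    with (INR (S n) * (M * / (s * s ^ n) * Cmod z ^ n))
    by (unfold Rdiv; rewrite Rpow_mult_distr, pow_inv; field; split; [apply pow_nonzero|]; lra).
  pose proof (Rabs_pos (w n)). pose proof (pow_le (Cmod z) n H).
  assert (Hsn : 0 < s * s ^ n) by (apply Rmult_lt_0_compat; [lra| apply pow_lt; lra]).
  assert (Hc1 : Cmod (c (S n)) <= M * / (s * s ^ n)).
  { apply (Rmult_le_reg_r (s * s ^ n)); [exact Hsn|].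
    rewrite Rmult_assoc, Rinv_l by lra. lra. }
  rewrite Rmult_assoc. apply Rmult_le_compat; try lra.
  - apply Rmult_le_pos; [apply Cmod_ge_0| exact H1].
  - apply Rmult_le_compat_r; [exact H1| exact Hc1].
Qed.

(** Taylor coefficients of [Jfun m tau lam 0 0 c - beta]. *)
Definition J_coef (tau : C) (lam beta : R) (c : nat -> C) (n : nat) : C :=
  match n with
  | O => (1 + / tau * (c 1%nat - 1) - RtoC beta)%C
  | S _ => (/ tau * RtoC (1 + INR n * lam) * c (S n))%C
  end.

Lemma Rcoef_0 (m : nat) (c : nat -> C) (n : nat) : Rcoef m 0 c (S n) = c (S n).
Proof. unfold Rcoef. simpl Nat.add. rewrite C_n_n. ring. Qed.

Lemma Jfun_series (m : nat) (tau : C) (lam beta : R) (c : nat -> C) (z : C) :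
  analytic_U c -> inU z ->
  is_series (fun n => J_coef tau lam beta c n * z ^ n)%C (Jfun m tau lam 0 0 c z - RtoC beta)%C.
Proof.
  intros Hc Hz.
  assert (S1 : is_series (fun n => Rcoef m 0 c (S n) * z ^ n)%C (Rh_div_z m 0 c z)).
  { apply is_series_Csum.
    eapply ex_series_ext; [|apply (ex_series_weighted_shift c (fun _ => 1) z Hc); [|exact Hz]].
    - intros n. rewrite Rcoef_0. simpl. ring.
    - intros n. rewrite Rabs_R1, S_INR. pose proof (pos_INR n). lra. }
  assert (S2 : is_series (fun n => RtoC (INR (S n)) * Rcoef m 0 c (S n) * z ^ n)%C
                         (Rh_d1 m 0 c z)).
  { apply is_series_Csum.
    eapply ex_series_ext; [|apply (ex_series_weighted_shift c (fun n => INR (S n)) z Hc); [|exact Hz]].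
    - intros n. rewrite Rcoef_0. reflexivity.
    - intros n. rewrite Rabs_pos_eq; [lra| apply pos_INR]. }
  set (K := (1 - / tau - RtoC beta)%C).
  assert (HT : is_series (fun n => (/ tau * (RtoC (1 - lam) * (Rcoef m 0 c (S n) * z ^ n)
                        + RtoC lam * (RtoC (INR (S n)) * Rcoef m 0 c (S n) * z ^ n))
                        + (if Nat.eqb n 0 then K else RtoC 0))%C)
             (/ tau * (RtoC (1 - lam) * Rh_div_z m 0 c z + RtoC lam * Rh_d1 m 0 c z) + K)%C).
  { exact (@is_series_plus C_AbsRing C_NormedModule _ _ _ _
    (@is_series_scal C_AbsRing C_NormedModule (/ tau)%C _ _
      (@is_series_plus C_AbsRing C_NormedModule _ _ _ _
        (@is_series_scal C_AbsRing C_NormedModule (RtoC (1 - lam)) _ _ S1)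
        (@is_series_scal C_AbsRing C_NormedModule (RtoC lam) _ _ S2)))
    (is_series_delta0 K)). }
  match goal with |- is_series _ ?x => replace x with
      (/ tau * (RtoC (1 - lam) * Rh_div_z m 0 c z + RtoC lam * Rh_d1 m 0 c z) + K)%C end.
  2:{ unfold Jfun, K.
      replace ((1 - lam) * (1 - 0)) with (1 - lam) by ring.
      replace (lam * (0 + 1) + 0) with lam by ring.
      replace (lam * 0) with 0 by ring.
      ring. }
  revert HT. apply is_series_ext. intros [|n]; rewrite Rcoef_0.
  - simpl. unfold K. rewrite RtoC_minus.
    match goal with |- ?a = ?b => change (@eq C a b) end. ring.
  - simpl Nat.eqb. cbv iota. unfold J_coef.
    rewrite !S_INR. repeat first [rewrite RtoC_plus | rewrite RtoC_minus | rewrite RtoC_mult].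
    match goal with |- ?a = ?b => change (@eq C a b) end. ring.
Qed.

(* Caratheodory's lemma applied to J - beta, which has positive real part. *)
Lemma Cmod_coef_le_of_Jfun (m : nat) (tau : C) (lam beta : R) (c : nat -> C) (n : nat) :
  analytic_U c -> c 1%nat = 1%C -> tau <> 0%C -> 0 <= lam -> (1 <= n)%nat ->
  (forall z, inU z -> beta < Re (Jfun m tau lam 0 0 c z)) ->
  Cmod (c (S n)) <= 2 * Cmod tau * (1 - beta) / (1 + INR n * lam).
Proof.
  intros Hc Hc1 Htau Hlam Hn HJ.
  set (e := J_coef tau lam beta c).
  assert (He : analytic_U e).
  { intros z Hz. exists (Jfun m tau lam 0 0 c z - RtoC beta)%C. apply Jfun_series; auto. }
  assert (Hpos : forall z, inU z -> 0 < Re (psum e z)).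
  { intros z Hz. unfold psum, e. rewrite (Csum_unique _ _ (Jfun_series m tau lam beta c z Hc Hz)).
    specialize (HJ z Hz). unfold Cminus. rewrite re_plus.
    change (Re (- RtoC beta)%C) with (- beta). lra. }
  pose proof (caratheodory_coef_bound e n He Hpos Hn) as H.
  assert (E0 : e 0%nat = RtoC (1 - beta)).
  { unfold e, J_coef. rewrite Hc1, RtoC_minus. ring. }
  rewrite E0 in H. simpl Re in H.
  destruct n as [|n']; [lia|].
  unfold e, J_coef in H.
  assert (Hp : 0 < 1 + INR (S n') * lam) by (pose proof (pos_INR (S n')); nra).
  assert (Ht : 0 < Cmod tau) by (apply Cmod_gt_0; exact Htau).
  rewrite !Cmod_mult, Cmod_inv, Cmod_RtoC_nonneg in H by (exact Htau || lra).
  apply Rle_div_r; [exact Hp|].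
  apply (Rmult_le_compat_l (Cmod tau)) in H; [| lra].
  replace (Cmod tau * (/ Cmod tau * (1 + INR (S n') * lam) * Cmod (c (S (S n')))))
    with (Cmod (c (S (S n'))) * (1 + INR (S n') * lam)) in H by (field; lra).
  lra.
Qed.

Definition bigO0 (F : R -> C) (K : nat) : Prop :=
  exists M d, 0 < d /\ forall t, 0 < t < d -> Cmod (F t) <= M * t ^ K.

Lemma bigO0_le_near (F G : R -> C) (K : nat) (d0 : R) : 0 < d0 ->
  (forall t, 0 < t < d0 -> Cmod (F t) <= Cmod (G t)) -> bigO0 G K -> bigO0 F K.
Proof.
  intros Hd0 HFG (M & d & Hd & HG). exists M, (Rmin d0 d).
  split; [apply Rmin_pos; auto|]. intros t Ht.
  pose proof (Rmin_l d0 d). pose proof (Rmin_r d0 d).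
  eapply Rle_trans; [apply HFG| apply HG]; lra.
Qed.

Lemma bigO0_eq_near (F G : R -> C) (K : nat) (d0 : R) : 0 < d0 ->
  (forall t, 0 < t < d0 -> F t = G t) -> bigO0 G K -> bigO0 F K.
Proof.
  intros Hd0 HFG. apply (bigO0_le_near F G K d0 Hd0). intros t Ht. rewrite HFG; auto. lra.
Qed.

Lemma bigO0_ext (F G : R -> C) (K : nat) : (forall t, F t = G t) -> bigO0 G K -> bigO0 F K.
Proof. intros H. apply (bigO0_eq_near F G K 1); [lra| intros; auto]. Qed.

Lemma bigO0_add (F G : R -> C) (K : nat) :
  bigO0 F K -> bigO0 G K -> bigO0 (fun t => F t + G t)%C K.
Proof.
  intros (M1 & d1 & Hd1 & H1) (M2 & d2 & Hd2 & H2). exists (M1 + M2), (Rmin d1 d2).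
  split; [apply Rmin_pos; auto|]. intros t Ht.
  pose proof (Rmin_l d1 d2). pose proof (Rmin_r d1 d2).
  eapply Rle_trans; [apply Cmod_triangle|].
  specialize (H1 t ltac:(lra)). specialize (H2 t ltac:(lra)). lra.
Qed.

Lemma bigO0_scal (F : R -> C) (k : C) (K : nat) : bigO0 F K -> bigO0 (fun t => k * F t)%C K.
Proof.
  intros (M & d & Hd & H). exists (Cmod k * M), d. split; auto. intros t Ht.
  rewrite Cmod_mult, Rmult_assoc. apply Rmult_le_compat_l; [apply Cmod_ge_0| auto].
Qed.

Lemma bigO0_opp (F : R -> C) (K : nat) : bigO0 F K -> bigO0 (fun t => - F t)%C K.
Proof.
  intros H. apply (bigO0_ext _ (fun t => (-1) * F t)%C); [intros; ring|]. apply bigO0_scal, H.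
Qed.

Lemma bigO0_sub (F G : R -> C) (K : nat) :
  bigO0 F K -> bigO0 G K -> bigO0 (fun t => F t - G t)%C K.
Proof. intros HF HG. apply bigO0_add; [exact HF| apply bigO0_opp, HG]. Qed.

Lemma bigO0_weaken (F : R -> C) (K K' : nat) : (K' <= K)%nat -> bigO0 F K -> bigO0 F K'.
Proof.
  intros HK (M & d & Hd & H). exists (Rabs M), (Rmin d 1).
  split; [apply Rmin_pos; lra|]. intros t Ht.
  pose proof (Rmin_l d 1). pose proof (Rmin_r d 1).
  assert (HtK : t ^ K <= t ^ K').
  { replace K with (K' + (K - K'))%nat by lia. rewrite pow_add.
    assert (t ^ (K - K') <= 1) by (rewrite <- (pow1 (K - K')); apply pow_incr; lra).
    pose proof (pow_le t K' ltac:(lra)). pose proof (pow_le t (K - K') ltac:(lra)). nra. }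
  pose proof (pow_le t K ltac:(lra)). pose proof (Rle_abs M). pose proof (Rabs_pos M).
  eapply Rle_trans; [apply H; lra|]. nra.
Qed.

Lemma bigO0_mul (F G : R -> C) (K1 K2 : nat) :
  bigO0 F K1 -> bigO0 G K2 -> bigO0 (fun t => F t * G t)%C (K1 + K2).
Proof.
  intros (M1 & d1 & Hd1 & H1) (M2 & d2 & Hd2 & H2). exists (M1 * M2), (Rmin d1 d2).
  split; [apply Rmin_pos; auto|]. intros t Ht.
  pose proof (Rmin_l d1 d2). pose proof (Rmin_r d1 d2).
  specialize (H1 t ltac:(lra)). specialize (H2 t ltac:(lra)).
  rewrite Cmod_mult, pow_add.
  replace (M1 * M2 * (t ^ K1 * t ^ K2)) with ((M1 * t ^ K1) * (M2 * t ^ K2)) by ring.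
  apply Rmult_le_compat; auto; apply Cmod_ge_0.
Qed.

Lemma bigO0_monomial (k : C) (K : nat) : bigO0 (fun t => k * RtoC t ^ K)%C K.
Proof.
  exists (Cmod k), 1. split; [lra|]. intros t Ht.
  rewrite Cmod_mult, Cmod_pow, Cmod_RtoC_nonneg by lra. lra.
Qed.

Lemma bigO0_monomial_coef_eq0 (k : C) (K : nat) :
  bigO0 (fun t => k * RtoC t ^ K)%C (S K) -> k = 0%C.
Proof.
  intros (M & d & Hd & H). apply Cmod_eq_0. apply Rle_antisym; [|apply Cmod_ge_0].
  apply Rnot_lt_le. intros Hk.
  pose proof (Rabs_pos M). pose proof (Rle_abs M).
  assert (Hm : 0 < Cmod k / (2 * (Rabs M + 1))) by (apply Rdiv_lt_0_compat; lra).
  pose proof (Rmin_l (d / 2) (Cmod k / (2 * (Rabs M + 1)))) as Hl.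
  pose proof (Rmin_r (d / 2) (Cmod k / (2 * (Rabs M + 1)))) as Hr.
  pose proof (Rmin_pos (d / 2) _ ltac:(lra) Hm) as Ht.
  set (t := Rmin (d / 2) (Cmod k / (2 * (Rabs M + 1)))) in *.
  apply Rle_div_r in Hr; [|lra].
  specialize (H t ltac:(lra)).
  rewrite Cmod_mult, Cmod_pow, Cmod_RtoC_nonneg in H by lra. simpl pow in H.
  assert (HtK : 0 < t ^ K) by (apply pow_lt; lra).
  assert (Cmod k <= M * t) by (apply (Rmult_le_reg_r (t ^ K)); [lra| nra]).
  nra.
Qed.

Lemma bigO0_le_id (F : R -> C) : bigO0 F 2 ->
  exists d, 0 < d /\ forall t, 0 < t < d -> Cmod (F t) <= t.
Proof.
  intros (M & d & Hd & H). exists (Rmin d (/ (Rabs M + 1))).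
  pose proof (Rabs_pos M). pose proof (Rle_abs M).
  split; [apply Rmin_pos; [lra| apply Rinv_0_lt_compat; lra]|]. intros t Ht.
  pose proof (Rmin_l d (/ (Rabs M + 1))). pose proof (Rmin_r d (/ (Rabs M + 1))).
  assert (Ht1 : t * (Rabs M + 1) < 1).
  { assert (E : / (Rabs M + 1) * (Rabs M + 1) = 1) by (apply Rinv_l; lra). nra. }
  specialize (H t ltac:(lra)). simpl in H. nra.
Qed.

Lemma Cmod_pow_sub_le (x y : C) (R : R) (K : nat) : 0 <= R -> Cmod x <= R -> Cmod y <= R ->
  Cmod (x ^ S K - y ^ S K)%C <= INR (S K) * R ^ K * Cmod (x - y)%C.
Proof.
  intros HR Hx Hy. induction K as [|K IH].
  - simpl. replace (x * 1 - y * 1)%C with (x - y)%C by ring. lra.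
  - replace (x ^ S (S K) - y ^ S (S K))%C with
      (x * (x ^ S K - y ^ S K) + (x - y) * y ^ S K)%C by (simpl; ring).
    eapply Rle_trans; [apply Cmod_triangle|]. rewrite !Cmod_mult, Cmod_pow.
    assert (Hyk : Cmod y ^ S K <= R ^ S K) by (apply pow_incr; split; [apply Cmod_ge_0| auto]).
    pose proof (Cmod_ge_0 (x - y)%C). pose proof (Cmod_ge_0 x).
    assert (0 <= INR (S K) * R ^ K * Cmod (x - y)%C)
      by (apply Rmult_le_pos; [apply Rmult_le_pos; [apply pos_INR| apply pow_le; lra]| lra]).
    assert (Cmod x * Cmod (x ^ S K - y ^ S K)%C <= R * (INR (S K) * R ^ K * Cmod (x - y)%C))
      by (apply Rmult_le_compat; auto; apply Cmod_ge_0).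
    assert (Cmod (x - y)%C * Cmod y ^ S K <= Cmod (x - y)%C * R ^ S K)
      by (apply Rmult_le_compat_l; auto).
    rewrite (S_INR (S K)). simpl pow in *. nra.
Qed.

Lemma Cmod_pow_sub_tangent_le (x y : C) (R : R) (n : nat) :
  0 <= R -> Cmod x <= R -> Cmod y <= R ->
  Cmod (x ^ S (S n) - y ^ S (S n) - RtoC (INR (S (S n))) * y ^ S n * (x - y))%C
    <= INR (S (S n)) ^ 2 * R ^ n * Cmod (x - y)%C ^ 2.
Proof.
  intros HR Hx Hy. induction n as [|n IH].
  - replace (x ^ 2 - y ^ 2 - RtoC (INR 2) * y ^ 1 * (x - y))%C with ((x - y) * (x - y))%C
      by (simpl; replace (INR 2) with 2 by (simpl; ring); rewrite RtoC_plus; ring).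
    rewrite Cmod_mult. simpl. nra.
  - set (N2 := INR (S (S n))).
    replace (x ^ S (S (S n)) - y ^ S (S (S n)) - RtoC (INR (S (S (S n)))) * y ^ S (S n) * (x - y))%C
      with (x * (x ^ S (S n) - y ^ S (S n) - RtoC N2 * y ^ S n * (x - y))
            + RtoC N2 * y ^ S n * ((x - y) * (x - y)))%C
      by (unfold N2; rewrite (S_INR (S (S n))), RtoC_plus; simpl; ring).
    eapply Rle_trans; [apply Cmod_triangle|].
    rewrite !Cmod_mult, Cmod_pow, Cmod_RtoC_nonneg by apply pos_INR.
    set (d := Cmod (x - y)%C) in *.
    set (E := Cmod (x ^ S (S n) - y ^ S (S n) - RtoC N2 * y ^ S n * (x - y))%C) in *.
    assert (HN2 : 0 <= N2) by apply pos_INR.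
    assert (Hyk : Cmod y ^ S n <= R ^ S n) by (apply pow_incr; split; [apply Cmod_ge_0| auto]).
    assert (Hd : 0 <= d) by apply Cmod_ge_0.
    assert (0 <= E) by apply Cmod_ge_0.
    pose proof (Cmod_ge_0 x).
    assert (Cmod x * E <= R * (N2 ^ 2 * R ^ n * d ^ 2)) by (apply Rmult_le_compat; auto).
    assert (0 <= R ^ S n) by (apply pow_le; lra).
    assert (N2 * Cmod y ^ S n * (d * d) <= N2 * R ^ S n * (d * d)).
    { apply Rmult_le_compat_r; [nra|]. apply Rmult_le_compat_l; auto. }
    rewrite (S_INR (S (S n))). fold N2. simpl pow in *.
    assert (0 <= R * R ^ n) by (apply Rmult_le_pos; [lra| apply pow_le; lra]).
    assert (0 <= R * R ^ n * (d * d)) by (apply Rmult_le_pos; nra).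
    nra.
Qed.

(** The coefficients of the inverse series up to order [2 m + 1], when
    [f = z + al z^(m+1) + ga z^(2m+1) + ...]. *)
Definition inv_coef (m : nat) (al ga : C) (n : nat) : C :=
  if Nat.eqb n 1 then 1%C
  else if Nat.eqb n (m + 1) then (- al)%C
  else if Nat.eqb n (2 * m + 1) then (RtoC (INR (m + 1)) * al * al - ga)%C
  else 0%C.

Lemma sum_lt_inv_coef (m : nat) (al ga w : C) (K : nat) : (1 <= m)%nat -> (K <= 2 * m + 1)%nat ->
  sum_lt (fun n => inv_coef m al ga n * w ^ n)%C K =
  ((if Nat.ltb 1 K then w else 0%C) + (if Nat.ltb (m + 1) K then - al * w ^ (m + 1) else 0%C))%C.
Proof.
  intros Hm. induction K as [|K IH]; intros HK; [simpl; ring|].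
  simpl sum_lt. rewrite IH by lia. unfold inv_coef.
  destruct (Nat.eqb_spec K 1); destruct (Nat.eqb_spec K (m + 1));
  destruct (Nat.eqb_spec K (2 * m + 1));
  destruct (Nat.ltb_spec 1 K); destruct (Nat.ltb_spec 1 (S K));
  destruct (Nat.ltb_spec (m + 1) K); destruct (Nat.ltb_spec (m + 1) (S K)); try lia;
  try (subst; simpl; ring); ring.
Qed.

Section InvCoefValues.

Variables (m : nat) (al ga : C).
Hypothesis Hm : (1 <= m)%nat.

Lemma inv_coef_1 : inv_coef m al ga 1 = 1%C.
Proof. reflexivity. Qed.

Lemma inv_coef_succ : inv_coef m al ga (m + 1) = (- al)%C.
Proof.
  unfold inv_coef. rewrite Nat.eqb_refl.
  destruct (Nat.eqb_spec (m + 1) 1); [lia|reflexivity].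
Qed.

Lemma inv_coef_top : inv_coef m al ga (2 * m + 1) = (RtoC (INR (m + 1)) * al * al - ga)%C.
Proof.
  unfold inv_coef. rewrite Nat.eqb_refl.
  destruct (Nat.eqb_spec (2 * m + 1) 1); [lia|].
  destruct (Nat.eqb_spec (2 * m + 1) (m + 1)); [lia|reflexivity].
Qed.

Lemma inv_coef_other (n : nat) : n <> 1%nat -> n <> (m + 1)%nat -> n <> (2 * m + 1)%nat ->
  inv_coef m al ga n = 0%C.
Proof.
  intros H1 H2 H3. unfold inv_coef.
  destruct (Nat.eqb_spec n 1), (Nat.eqb_spec n (m + 1)), (Nat.eqb_spec n (2 * m + 1));
    easy || lia.
Qed.

End InvCoefValues.

Section InverseCoefficients.

Variables (m : nat) (a b : nat -> C).
Hypothesis Hm : (1 <= m)%nat.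
Hypothesis Ha : analytic_U a.
Hypothesis Ha1 : a 1%nat = 1%C.
Hypothesis Ha_sparse : forall n, a n <> 0%C -> exists k, n = (m * k + 1)%nat.
Hypothesis Hb : analytic_U b.
Hypothesis Hba : forall z, inU z -> inU (psum a z) -> psum b (psum a z) = z.

Local Notation f t := (psum a (RtoC t)).
Local Notation al := (a (m + 1)%nat).
Local Notation ga := (a (2 * m + 1)%nat).

Lemma sum_lt_sparse (w : C) :
  sum_lt (fun n => a n * w ^ n)%C (2 * m + 2) = (w + al * w ^ (m + 1) + ga * w ^ (2 * m + 1))%C.
Proof.
  rewrite (sum_lt_ext _ (fun n => (if Nat.eqb n 1 then w else 0%C)
                                + (if Nat.eqb n (m + 1) then al * w ^ (m + 1) else 0%C)
                                + (if Nat.eqb n (2 * m + 1) then ga * w ^ (2 * m + 1) else 0%C))%C).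
  - rewrite !sum_lt_add, !sum_lt_indicator by lia. reflexivity.
  - intros n Hn.
    destruct (Nat.eqb_spec n 1); destruct (Nat.eqb_spec n (m + 1));
    destruct (Nat.eqb_spec n (2 * m + 1)); try lia; subst; try (rewrite Ha1; simpl; ring); try ring.
    destruct (classic (a n = 0%C)) as [Z|Z]; [rewrite Z; ring|].
    destruct (Ha_sparse n Z) as [k ->]. exfalso.
    destruct k as [|[|[|k]]]; nia.
Qed.

Lemma f_expansion :
  bigO0 (fun t => f t - (RtoC t + al * RtoC t ^ (m + 1) + ga * RtoC t ^ (2 * m + 1)))%C (2 * m + 2).
Proof.
  destruct (psum_sub_sum_lt_le a (2 * m + 2) Ha) as [K [HK HKw]].
  exists K, (1/2). split; [lra|]. intros t Ht.
  rewrite <- sum_lt_sparse.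
  assert (E : Cmod (RtoC t) = t) by (apply Cmod_RtoC_nonneg; lra).
  rewrite <- E at 2. apply HKw. lra.
Qed.

Lemma f_sub_id_sub : bigO0 (fun t => f t - RtoC t - al * RtoC t ^ (m + 1))%C (2 * m + 1).
Proof.
  apply (bigO0_ext _ (fun t => (f t - (RtoC t + al * RtoC t ^ (m + 1) + ga * RtoC t ^ (2 * m + 1)))
                               + ga * RtoC t ^ (2 * m + 1))%C); [intros t; ring|].
  apply bigO0_add; [| apply bigO0_monomial].
  eapply bigO0_weaken; [| exact f_expansion]. lia.
Qed.

Lemma f_sub_id : bigO0 (fun t => f t - RtoC t)%C (m + 1).
Proof.
  apply (bigO0_ext _ (fun t => (f t - RtoC t - al * RtoC t ^ (m + 1)) + al * RtoC t ^ (m + 1))%C);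
    [intros t; ring|].
  apply bigO0_add; [| apply bigO0_monomial].
  eapply bigO0_weaken; [| exact f_sub_id_sub]. lia.
Qed.

Lemma Cmod_f_le : exists d, 0 < d /\ forall t, 0 < t < d -> Cmod (f t) <= 2 * t.
Proof.
  destruct (bigO0_le_id (fun t => f t - RtoC t)%C) as [d [Hd Hfd]].
  { eapply bigO0_weaken; [| exact f_sub_id]. lia. }
  exists d. split; [exact Hd|]. intros t Ht. specialize (Hfd t Ht).
  replace (f t) with ((f t - RtoC t) + RtoC t)%C by ring.
  eapply Rle_trans; [apply Cmod_triangle|]. rewrite Cmod_RtoC_nonneg; lra.
Qed.

Lemma f_pow_expansion :
  bigO0 (fun t => f t ^ (m + 1) - RtoC t ^ (m + 1)
                  - RtoC (INR (m + 1)) * al * RtoC t ^ (2 * m + 1))%C (2 * m + 2).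
Proof.
  destruct Cmod_f_le as [d [Hd Hfd]].
  apply (bigO0_ext _ (fun t =>
     (f t ^ (m + 1) - RtoC t ^ (m + 1) - RtoC (INR (m + 1)) * RtoC t ^ m * (f t - RtoC t))
     + RtoC (INR (m + 1)) * RtoC t ^ m * (f t - RtoC t - al * RtoC t ^ (m + 1)))%C).
  { intros t. replace (2 * m + 1)%nat with (m + (m + 1))%nat by lia. rewrite (Cpow_add_r (RtoC t) m (m + 1)). ring. }
  apply bigO0_add.
  - apply (bigO0_le_near _ (fun t => RtoC (INR (m + 1) ^ 2 * 2 ^ (m - 1)) * RtoC t ^ (m - 1)
                                    * ((f t - RtoC t) * (f t - RtoC t)))%C _ d Hd).
    + intros t Ht. assert (HT : Cmod (RtoC t) = t) by (apply Cmod_RtoC_nonneg; lra).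
      replace (m + 1)%nat with (S (S (m - 1))) by lia.
      replace (RtoC t ^ m)%C with (RtoC t ^ S (m - 1))%C by (f_equal; lia).
      eapply Rle_trans; [apply (Cmod_pow_sub_tangent_le _ _ (2 * t)); try lra; apply Hfd, Ht|].
      rewrite !Cmod_mult, Cmod_pow, HT, Cmod_RtoC_nonneg.
      * rewrite Rpow_mult_distr. simpl pow. right. ring.
      * apply Rmult_le_pos; apply pow_le; [apply pos_INR| lra].
    + eapply bigO0_weaken;
        [| apply bigO0_mul; [apply bigO0_monomial| apply bigO0_mul; exact f_sub_id]]. lia.
  - eapply bigO0_weaken; [| apply bigO0_mul; [apply bigO0_monomial| exact f_sub_id_sub]]. lia.
Qed.

Lemma inverse_residual_expansion :
  bigO0 (fun t => RtoC t - f t + al * f t ^ (m + 1)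
                  - (RtoC (INR (m + 1)) * al * al - ga) * RtoC t ^ (2 * m + 1))%C (2 * m + 2).
Proof.
  apply (bigO0_ext _ (fun t =>
     - (f t - (RtoC t + al * RtoC t ^ (m + 1) + ga * RtoC t ^ (2 * m + 1)))
     + al * (f t ^ (m + 1) - RtoC t ^ (m + 1) - RtoC (INR (m + 1)) * al * RtoC t ^ (2 * m + 1)))%C);
    [intros t; ring|].
  apply bigO0_add; [apply bigO0_opp, f_expansion| apply bigO0_scal, f_pow_expansion].
Qed.

Lemma inv_coef_residual (K : nat) : (K <= 2 * m + 1)%nat ->
  bigO0 (fun t => RtoC t - sum_lt (fun n => inv_coef m al ga n * f t ^ n) K
                  - inv_coef m al ga K * RtoC t ^ K)%C (S K).
Proof.
  intros HK.
  apply (bigO0_ext _ (fun t => RtoC t - ((if Nat.ltb 1 K then f t else 0%C)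
           + (if Nat.ltb (m + 1) K then - al * f t ^ (m + 1) else 0%C))
           - inv_coef m al ga K * RtoC t ^ K)%C).
  { intros t. rewrite sum_lt_inv_coef by lia. reflexivity. }
  destruct (Nat.ltb_spec 1 K); [destruct (Nat.ltb_spec (m + 1) K)|].
  - destruct (Nat.eq_dec K (2 * m + 1)) as [->|HK'].
    + rewrite inv_coef_top by exact Hm. replace (S (2 * m + 1)) with (2 * m + 2)%nat by lia.
      eapply bigO0_ext; [|exact inverse_residual_expansion]. intros t; simpl; ring.
    + rewrite inv_coef_other by lia.
      apply (bigO0_ext _ (fun t => (RtoC t - f t + al * f t ^ (m + 1)
                  - (RtoC (INR (m + 1)) * al * al - ga) * RtoC t ^ (2 * m + 1))
                  + (RtoC (INR (m + 1)) * al * al - ga) * RtoC t ^ (2 * m + 1))%C);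
        [intros t; ring|].
      eapply bigO0_weaken; [|apply bigO0_add; [|apply bigO0_monomial]].
      * lia.
      * eapply bigO0_weaken; [|exact inverse_residual_expansion]. lia.
  - destruct (Nat.eq_dec K (m + 1)) as [->|HK'].
    + rewrite inv_coef_succ by exact Hm.
      apply (bigO0_ext _ (fun t => - (f t - RtoC t - al * RtoC t ^ (m + 1)))%C); [intros t; ring|].
      apply bigO0_opp. eapply bigO0_weaken; [|exact f_sub_id_sub]. lia.
    + rewrite inv_coef_other by lia.
      apply (bigO0_ext _ (fun t => - (f t - RtoC t))%C); [intros t; ring|].
      apply bigO0_opp. eapply bigO0_weaken; [|exact f_sub_id]. lia.
  - destruct (Nat.ltb_spec (m + 1) K); [lia|].
    destruct K as [|[|K]]; [| |lia].
    + rewrite inv_coef_other by lia.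
      apply (bigO0_ext _ (fun t => 1 * RtoC t ^ 1)%C); [intros t; simpl; ring| apply bigO0_monomial].
    + rewrite inv_coef_1.
      apply (bigO0_ext _ (fun t => 0 * RtoC t ^ 2)%C); [intros t; simpl; ring| apply bigO0_monomial].
Qed.

Lemma psum_b_f_sub_sum_lt (K : nat) :
  bigO0 (fun t => psum b (f t) - sum_lt (fun n => b n * f t ^ n) (S K))%C (S K).
Proof.
  destruct Cmod_f_le as [d [Hd Hfd]].
  destruct (psum_sub_sum_lt_le b (S K) Hb) as [M [HM HMw]].
  exists (M * 2 ^ S K), (Rmin d (1/4)). split; [apply Rmin_pos; lra|].
  intros t Ht. pose proof (Rmin_l d (1/4)). pose proof (Rmin_r d (1/4)).
  specialize (Hfd t ltac:(lra)).
  eapply Rle_trans; [apply HMw; lra|].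
  rewrite Rmult_assoc, <- Rpow_mult_distr. apply Rmult_le_compat_l; [exact HM|].
  apply pow_incr. split; [apply Cmod_ge_0| lra].
Qed.

Lemma pow_id_sub_pow_f (K : nat) : bigO0 (fun t => RtoC t ^ K - f t ^ K)%C (S K).
Proof.
  destruct Cmod_f_le as [d [Hd Hfd]].
  destruct K as [|K].
  { apply (bigO0_ext _ (fun t => 0 * RtoC t ^ 1)%C); [intros; simpl; ring| apply bigO0_monomial]. }
  apply (bigO0_le_near _ (fun t => RtoC (INR (S K) * 2 ^ K) * RtoC t ^ K * (f t - RtoC t))%C _ d Hd).
  - intros t Ht. assert (HT : Cmod (RtoC t) = t) by (apply Cmod_RtoC_nonneg; lra).
    replace (RtoC t ^ S K - f t ^ S K)%C with (- (f t ^ S K - RtoC t ^ S K))%C by ring.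
    rewrite Cmod_opp.
    eapply Rle_trans; [apply (Cmod_pow_sub_le _ _ (2 * t)); try lra; apply Hfd, Ht|].
    rewrite !Cmod_mult, Cmod_pow, HT, Cmod_RtoC_nonneg.
    + rewrite Rpow_mult_distr. right. ring.
    + apply Rmult_le_pos; [apply pos_INR| apply pow_le; lra].
  - eapply bigO0_weaken; [| apply bigO0_mul; [apply bigO0_monomial| exact f_sub_id]]. lia.
Qed.

(* Expand t = psum b (f t) and isolate the K-th term of the inverse series. *)
Lemma inverse_coef_step (K : nat) :
  (forall n, (n < K)%nat -> b n = inv_coef m al ga n) ->
  bigO0 (fun t => b K * RtoC t ^ K
                  - (RtoC t - sum_lt (fun n => inv_coef m al ga n * f t ^ n) K))%C (S K).
Proof.
  intros IH. destruct Cmod_f_le as [d [Hd Hfd]].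
  apply (bigO0_eq_near _ (fun t => b K * (RtoC t ^ K - f t ^ K)
            - (psum b (f t) - sum_lt (fun n => b n * f t ^ n) (S K)))%C _ (Rmin d (1/4))).
  - apply Rmin_pos; lra.
  - intros t Ht. pose proof (Rmin_l d (1/4)). pose proof (Rmin_r d (1/4)).
    specialize (Hfd t ltac:(lra)).
    assert (HT : Cmod (RtoC t) = t) by (apply Cmod_RtoC_nonneg; lra).
    rewrite Hba by (unfold inU; lra). cbn [sum_lt].
    rewrite (sum_lt_ext (fun n => b n * f t ^ n) (fun n => inv_coef m al ga n * f t ^ n))%C
      by (intros n Hn; rewrite IH by exact Hn; reflexivity).
    ring.
  - apply bigO0_sub; [apply bigO0_scal, pow_id_sub_pow_f| apply psum_b_f_sub_sum_lt].
Qed.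

Lemma inverse_coef_eq (K : nat) : (K <= 2 * m + 1)%nat -> b K = inv_coef m al ga K.
Proof.
  induction K as [K IH] using lt_wf_ind. intros HK.
  assert (H := bigO0_add _ _ _ (inverse_coef_step K (fun n Hn => IH n Hn ltac:(lia)))
                               (inv_coef_residual K HK)).
  apply (bigO0_ext (fun t => (b K - inv_coef m al ga K) * RtoC t ^ K)%C) in H;
    [|intros t; ring].
  apply bigO0_monomial_coef_eq0 in H.
  replace (b K) with (b K - inv_coef m al ga K + inv_coef m al ga K)%C by ring.
  rewrite H. ring.
Qed.

End InverseCoefficients.

Lemma Cmod_le_two_sqrt_div (p B : R) (al ga : C) : 0 < p ->
  Cmod ga <= 2 * B -> Cmod (RtoC p * al * al - ga)%C <= 2 * B -> Cmod al <= 2 * sqrt (B / p).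
Proof.
  intros Hp Hga Hb.
  assert (Hsq : p * Cmod al ^ 2 <= 4 * B).
  { replace (p * Cmod al ^ 2) with (Cmod (RtoC p * al * al)%C)
      by (rewrite !Cmod_mult, Cmod_RtoC_nonneg by lra; ring).
    replace (RtoC p * al * al)%C with ((RtoC p * al * al - ga) + ga)%C by ring.
    eapply Rle_trans; [apply Cmod_triangle| lra]. }
  assert (HB : 0 <= B) by (pose proof (Cmod_ge_0 ga); lra).
  rewrite <- (sqrt_pow2 (Cmod al)) by apply Cmod_ge_0.
  replace (2 * sqrt (B / p)) with (sqrt (4 * (B / p))).
  - apply sqrt_le_1_alt, (Rmult_le_reg_l p); [exact Hp|].
    replace (p * (4 * (B / p))) with (4 * B) by (field; lra). exact Hsq.
  - rewrite sqrt_mult by (lra || (apply Rdiv_le_0_compat; lra)).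
    replace 4 with (2 ^ 2) by ring. rewrite sqrt_pow2 by lra. reflexivity.
Qed.

Theorem corollary2 (m : nat) (lam beta : R) (tau : C) (a : nat -> C) :
  (1 <= m)%nat -> (0 <= lam)%R -> (0 <= beta < 1)%R -> tau <> 0%C ->
  in_Theta m tau lam 0%R 0%nat beta a ->
  (Cmod (a (m + 1)%nat) <=
     Rmin (2 * Cmod tau * (1 - beta) / (1 + INR m * lam))
          (2 * sqrt (Cmod tau * (1 - beta) / ((INR m + 1) * (1 + 2 * INR m * lam)))))%R /\
  (Cmod (a (2 * m + 1)%nat) <= 2 * Cmod tau * (1 - beta) / (1 + 2 * INR m * lam))%R.
Proof.
  intros Hm Hlam Hbeta Htau (b & ((Ha & _ & Ha1 & Ha_sparse) & _ & Hb & _ & Hba) & HJa & HJb).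
  pose proof (inverse_coef_eq m a b Hm Ha Ha1 Ha_sparse Hb Hba) as Hinv.
  assert (Hb1 : b 1%nat = 1%C) by (rewrite Hinv by lia; apply inv_coef_1).
  assert (H2m : INR (2 * m) = 2 * INR m) by (rewrite mult_INR; reflexivity).
  pose proof (Cmod_coef_le_of_Jfun m tau lam beta a m Ha Ha1 Htau Hlam Hm HJa) as Ha_m.
  pose proof (Cmod_coef_le_of_Jfun m tau lam beta a (2 * m) Ha Ha1 Htau Hlam ltac:(lia) HJa) as Ha_2m.
  pose proof (Cmod_coef_le_of_Jfun m tau lam beta b (2 * m) Hb Hb1 Htau Hlam ltac:(lia) HJb) as Hb_2m.
  rewrite <- Nat.add_1_r in Ha_m, Ha_2m, Hb_2m. rewrite H2m in Ha_2m, Hb_2m.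
  rewrite Hinv, inv_coef_top in Hb_2m by lia.
  split; [apply Rmin_glb; [exact Ha_m|]| exact Ha_2m].
  replace (Cmod tau * (1 - beta) / ((INR m + 1) * (1 + 2 * INR m * lam)))
    with (Cmod tau * (1 - beta) / (1 + 2 * INR m * lam) / INR (m + 1)).
  2:{ rewrite plus_INR. simpl INR. field. pose proof (pos_INR m). split; nra. }
  apply (Cmod_le_two_sqrt_div _ _ _ (a (2 * m + 1)%nat)); [apply lt_0_INR; lia| |];
    unfold Rdiv in *; lra.
Qed.
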